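(* Let $X,Y$ be triangulable spaces, $f:X\to Y$ a homeomorphism, $k\in\mathbb{Z}$, and $\vec\varphi:X\to\mathbb{R}^n$, $\vec\psi:Y\to\mathbb{R}^n$ continuous functions with $\max_{x\in X}\|\vec\varphi(x)-\vec\psi(f(x))\|_\infty\le h$. Setting $\vec h=(h,\dots,h)$, for every $(\vec u,\vec v)\in\Delta^+$ we have $\rho_{(X,\vec\varphi),k}(\vec u-\vec h,\vec v+\vec h)\le\rho_{(Y,\vec\psi),k}(\vec u,\vec v)$.
   Context: A triangulable space is a space homeomorphic to the underlying space of a finite simplicial complex. $\|\cdot\|_\infty$ is the max-norm on $\mathbb{R}^n$. For $\vec u,\vec v\in\mathbb{R}^n$, $\vec u\preceq\vec v$ (resp. $\prec$) means $u_i\le v_i$ (resp. $u_i<v_i$) for all $i$; $\Delta^+=\{(\vec u,\vec v):\vec u\prec\vec v\}$. $X\langle\vec\varphi\preceq\vec u\rangle=\{x\in X:\varphi_i(x)\le u_i\ \forall i\}$. Homology is Čech homology with coefficients in a field. For $\vec u\prec\vec v$, $\rho_{(X,\vec\varphi),k}(\vec u,\vec v)$ is the rank of the map $\check H_k(X\langle\vec\varphi\preceq\vec u\rangle)\to\check H_k(X\langle\vec\varphi\preceq\vec v\rangle)$ induced by inclusion. *)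

From HB Require Import structures.
From mathcomp Require Import all_boot all_order all_algebra.
From mathcomp Require Import all_classical all_reals topology normedtype.

Set Implicit Arguments.
Unset Strict Implicit.
Unset Printing Implicit Defensive.

Import Order.TTheory GRing.Theory Num.Theory.
Import numFieldNormedType.Exports.
Local Open Scope classical_set_scope.
Local Open Scope ring_scope.

Definition homeomorphism (X Y : topologicalType) (f : X -> Y) : Prop :=
  continuous f /\
  exists g : Y -> X, continuous g /\ cancel f g /\ cancel g f.

Definition homeomorphism_from (T X : topologicalType) (S : set T) (g : T -> X)
  : Prop :=
  {within S, continuous g} /\
  exists g' : X -> T, continuous g' /\ (forall x, S (g' x)) /\
    (forall x, g (g' x) = x) /\ (forall t, S t -> g' (g t) = t).

Definition simplicial_complex (V : nat) (K : {set {set 'I_V}}) : Prop :=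
  (forall s, s \in K -> s != finset.set0) /\
  (forall s t : {set 'I_V}, s \in K -> t \subset s -> t != finset.set0 -> t \in K).

(* standard geometric realization |K| in R^V (vertex i |-> i-th basis vector) *)
Definition realization (R : realType) (V : nat) (K : {set {set 'I_V}})
  : set 'rV[R]_V :=
  [set x | (forall i, 0 <= x ord0 i) /\ \sum_i x ord0 i = 1 /\
           [set i | x ord0 i != 0]%SET \in K].

Definition triangulable (R : realType) (X : topologicalType) : Prop :=
  exists V (K : {set {set 'I_V}}) (g : 'rV[R]_V -> X),
    simplicial_complex K /\ homeomorphism_from (@realization R V K) g.

(* Cech homology (field coefficients) of a subspace A of X            *)
(*   = inverse limit, over finite open covers, of the (ordered)       *)
(*     simplicial homology of the nerves.                             *)

Section Cech.
Variables (F : fieldType) (X : topologicalType).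

(* a finite open cover of A (indexed by a finite type I), given by open sets
   of X; its trace on A is an open cover of A in the subspace topology *)
Definition open_cover (A : set X) (I : finType) (W : I -> set X) : Prop :=
  (forall i, open (W i)) /\ A `<=` \bigcup_i W i.

Definition osimplex (k : nat) (I : finType) := {ffun 'I_k.+1 -> I}.

Definition in_nerve (A : set X) (I : finType) (W : I -> set X) (k : nat)
  (s : osimplex k I) : Prop :=
  exists x, A x /\ forall j, W (s j) x.

Definition chain (k : nat) (I : finType) := {ffun osimplex k I -> F}.

Definition supported (A : set X) (I : finType) (W : I -> set X) (k : nat)
  (c : chain k I) : Prop :=
  forall s, c s != 0 -> in_nerve A W s.

Definition face (k : nat) (I : finType) (j : 'I_k.+2) (s : osimplex k.+1 I)
  : osimplex k I := [ffun i => s (lift j i)].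

Definition boundary (k : nat) (I : finType) (c : chain k.+1 I) : chain k I :=
  [ffun t => \sum_(s : osimplex k.+1 I) \sum_(j < k.+2)
                (-1) ^+ j * c s * (face j s == t)%:R].

Definition is_cycle (k : nat) (I : finType) : chain k I -> Prop :=
  match k with
  | 0 => fun _ => True
  | k'.+1 => fun c => boundary c = 0
  end.

Definition is_boundary (A : set X) (I : finType) (W : I -> set X) (k : nat)
  (d : chain k I) : Prop :=
  exists e : chain k.+1 I, supported A W e /\ boundary e = d.

Definition push (k : nat) (I J : finType) (lam : J -> I) (c : chain k J)
  : chain k I :=
  [ffun t => \sum_(s : osimplex k J | [ffun i => lam (s i)] == t) c s].

Definition cech_family (k : nat) :=
  forall (I : finType) (W : I -> set X), chain k I.

(* e represents an element of the Cech homology group H_k(A): its components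
   are cycles of the nerves, compatible (up to boundaries) with all the
   refinement projections *)
Definition cech_element (A : set X) (k : nat) (e : cech_family k) : Prop :=
  (forall (I : finType) (W : I -> set X), open_cover A W ->
     supported A W (e I W) /\ is_cycle (e I W)) /\
  (forall (I J : finType) (W : I -> set X) (V : J -> set X) (lam : J -> I),
     open_cover A W -> open_cover A V ->
     (forall j, V j `&` A `<=` W (lam j)) ->
     is_boundary A W (push lam (e J V) - e I W)).

(* For A `<=` B, the inclusion-induced map H_k(A) -> H_k(B) sends e to the
   family e restricted to the open covers of B (each of which is an open cover
   of A, whose A-nerve is a subcomplex of its B-nerve).
   rank_ge A B k m  <->  the rank of H_k(A) -> H_k(B) is at least m, i.e. there
   are m elements of H_k(A) whose images in H_k(B) are linearly independent. *)
Definition rank_ge_nat (A B : set X) (k : nat) (m : nat) : Prop :=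
  exists e : 'I_m -> cech_family k,
    (forall i, cech_element A (e i)) /\
    forall a : 'I_m -> F, (exists i, a i != 0) ->
      exists (I : finType) (W : I -> set X),
        open_cover B W /\
        ~ is_boundary B W [ffun t => \sum_i a i * e i I W t].

(* homology in negative degrees is 0 *)
Definition rank_ge (A B : set X) (k : int) (m : nat) : Prop :=
  match k with
  | Posz k' => rank_ge_nat A B k' m
  | Negz _ => m = 0%N
  end.

End Cech.

Definition sublevel (R : realType) (X : topologicalType) (n : nat)
  (phi : 'I_n -> X -> R) (u : 'I_n -> R) : set X :=
  [set x | forall i, phi i x <= u i].

Definition pbn_ge (R : realType) (F : fieldType) (X : topologicalType)
  (n : nat) (phi : 'I_n -> X -> R) (k : int) (u v : 'I_n -> R) (m : nat)
  : Prop :=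
  rank_ge F (sublevel phi u) (sublevel phi v) k m.

From HB Require Import structures.
From mathcomp Require Import all_boot all_order all_algebra.
From mathcomp Require Import all_classical all_reals topology normedtype.
From mathcomp Require Import lra.
Import Order.TTheory GRing.Theory Num.Theory.
Import numFieldNormedType.Exports.
Local Open Scope classical_set_scope.
Local Open Scope ring_scope.
Set Implicit Arguments.
Unset Strict Implicit.

(* The homeomorphism f maps the sublevel set of phi at u - h into that of psi
   at u, and its inverse g maps the sublevel set of psi at v into that of phi
   at v + h.  Cech classes are carried along f by pulling open covers back
   along f; a cover W witnessing that a combination does not bound is pulled
   back along g, and pulling that back along f returns W since g o f = id. *)

Section CechPreimage.
Variables (F : fieldType) (X Y : topologicalType) (f : X -> Y).

Definition cech_map (k : nat) (e : cech_family F X k) : cech_family F Y k :=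
  fun I W => e I (fun j => f @^-1` W j).

Lemma open_cover_preimage (A : set X) (A' : set Y) (I : finType)
    (W : I -> set Y) :
  continuous f -> A `<=` f @^-1` A' ->
  open_cover A' W -> open_cover A (fun j => f @^-1` W j).
Proof.
move=> cf AA' [oW cW]; split=> [i|x /AA' /cW [i _ Wi]]; last by exists i.
exact: open_comp (fun x _ => cf x) (oW i).
Qed.

Lemma supported_preimage (A : set X) (A' : set Y) (I : finType)
    (W : I -> set Y) (k : nat) (c : chain F k I) :
  A `<=` f @^-1` A' ->
  supported A (fun j => f @^-1` W j) c -> supported A' W c.
Proof. by move=> AA' sc s /sc [x [Ax Wx]]; exists (f x); split=> //; apply: AA'. Qed.

Lemma is_boundary_preimage (A : set X) (A' : set Y) (I : finType)
    (W : I -> set Y) (k : nat) (c : chain F k I) :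
  A `<=` f @^-1` A' ->
  is_boundary A (fun j => f @^-1` W j) c -> is_boundary A' W c.
Proof.
by move=> AA' [e [se be]]; exists e; split=> //; apply: supported_preimage se.
Qed.

Lemma cech_element_map (A : set X) (A' : set Y) (k : nat)
    (e : cech_family F X k) :
  continuous f -> A `<=` f @^-1` A' ->
  cech_element A e -> cech_element A' (cech_map e).
Proof.
move=> cf AA' [cycle_e compat_e]; split.
  move=> I W /(open_cover_preimage cf AA') /cycle_e [se ce].
  by split=> //; apply: supported_preimage se.
move=> I J W V lam oW oV refine_VW; apply: (is_boundary_preimage AA').
apply: compat_e (open_cover_preimage cf AA' oW) (open_cover_preimage cf AA' oV) _.
by move=> j x [Vx Ax]; apply: (refine_VW j (f x)); split=> //; apply: AA'.
Qed.

End CechPreimage.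

Lemma rank_ge_map (F : fieldType) (X Y : topologicalType) (f : X -> Y)
    (g : Y -> X) (A B : set X) (A' B' : set Y) (k : int) (m : nat) :
  continuous f -> continuous g -> cancel f g ->
  A `<=` f @^-1` A' -> B' `<=` g @^-1` B ->
  rank_ge F A B k m -> rank_ge F A' B' k m.
Proof.
move=> cf cg fK AA' BB'; case: k => [k|//] [e [cech_e indep_e]].
exists (fun i => cech_map f (e i)); split=> [i|a a_neq0].
  exact: cech_element_map cf AA' (cech_e i).
have [I [W [oW not_bnd]]] := indep_e a a_neq0.
exists I, (fun j => g @^-1` W j); split.
  exact: open_cover_preimage cg BB' oW.
rewrite /cech_map; have -> : (fun j => f @^-1` (g @^-1` W j)) = W.
  by apply/funext => j; apply/funext => x; rewrite /preimage /= fK.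
by move=> /(is_boundary_preimage BB').
Qed.

Lemma sublevel_shift (R : realType) (X : topologicalType) (n : nat)
    (phi psi : 'I_n -> X -> R) (h : R) (u : 'I_n -> R) :
  (forall i x, phi i x <= psi i x + h) ->
  sublevel psi u `<=` sublevel phi (fun i => u i + h).
Proof. by move=> le_phi x psi_le i; rewrite (le_trans (le_phi i x)) ?lerD2r. Qed.

Theorem mainTheorem5 (R : realType) (F : fieldType) (X Y : topologicalType)
  (n : nat) (k : int) (f : X -> Y)
  (phi : 'I_n -> X -> R) (psi : 'I_n -> Y -> R) (h : R)
  (u v : 'I_n -> R) (m : nat) :
  triangulable R X -> triangulable R Y -> homeomorphism f ->
  (forall i, continuous (phi i)) -> (forall i, continuous (psi i)) ->
  (forall x i, `|phi i x - psi i (f x)| <= h) ->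
  (forall i, u i < v i) ->
  pbn_ge F phi k (fun i => u i - h) (fun i => v i + h) m ->
  pbn_ge F psi k u v m.
Proof.
move=> _ _ [cf [g [cg [fK gK]]]] _ _ close _.
have psi_f_le i x : psi i (f x) <= phi i x + h.
  by move: (close x i); rewrite ler_norml => /andP[? _]; lra.
have phi_g_le i y : phi i (g y) <= psi i y + h.
  by move: (close (g y) i); rewrite gK ler_norml => /andP[_ ?]; lra.
apply: rank_ge_map cf cg fK _ _ => [x /(sublevel_shift psi_f_le) le_u i|y].
  by rewrite /= -(subrK h (u i)) le_u.
exact: (sublevel_shift (psi := fun i y => psi i y) phi_g_le).
Qed.
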